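(* Let $(A,S)$ be an SP, $k\in Q_0$ with no oriented 2-cycle of $Q$ incident to $k$ and with no cyclic path of $S$ starting or ending at $k$, and let $M$ be a (finite-dimensional, nilpotent) representation of $(A,S)$. Then the map $\gamma:M_{\rm out}\to M_{\rm in}$ is $F_k$-linear and satisfies $\gamma\beta=0$ and $\alpha\gamma=0$.
   Context: Standing setup: strongly primitive weighted quiver $(Q,\mathbf d)$; $d=\operatorname{lcm}(d_i)$; $F$ with a primitive $d$-th root of unity; $E/F$ cyclic Galois of degree $d$; $F_i$ the degree-$d_i$ subextension with eigenbasis $\mathcal B_i$ (from a fixed eigenbasis of $E/F$; $\mathcal B_k\ni 1$); arrow span $A$, complete path algebra, paths $\omega_0a_1\omega_1\cdots a_\ell\omega_\ell$, potentials, cyclic derivatives $\partial_a$ as in the paper; an SP is a pair $(A,S)$ with no two distinct terms of $S$ cyclically equivalent. A representation $M$ of $(A,S)$: finite-dimensional $F_i$-vector spaces $M_i$ ($i\in Q_0$) and $F$-linear maps $a_M:M_{t(a)}\to M_{h(a)}$ ($a\in Q_1$) such that all sufficiently long paths act by zero and all $\partial_a(S)$ act by zero (equivalently a finite-dimensional $\mathcal P(A,S)$-module). Let $a_1,\dots,a_p$ be the arrows with head $k$ and $b_1,\dots,b_q$ those with tail $k$; $M_{\rm in}=\bigoplus_s F_k\otimes_FM_{t(a_s)}$, $M_{\rm out}=\bigoplus_rF_k\otimes_FM_{h(b_r)}$. $\alpha:M_{\rm in}\to M_k$ has components $x\otimes m\mapsto x\,a_{s,M}(m)$; $\beta:M_k\to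 M_{\rm out}$ has components $m\mapsto\sum_{\omega\in\mathcal B_k}\omega^{-1}\otimes b_{r,M}(\omega m)$. For arrows $a,b$ with $h(a)=k=t(b)$ and $\omega\in\mathcal B_k$, $\partial_{b\omega a}$ is the continuous $F$-linear map on potentials with $\partial_{b\omega a}(c_1\omega_1c_2\cdots c_\ell\omega_\ell)=\sum_{t=1}^\ell\delta_{b\omega a,\,c_t\omega_tc_{t+1}}\,\omega_{t+1}c_{t+2}\cdots c_\ell\omega_\ell c_1\cdots c_{t-1}\omega_{t-1}$ (indices cyclic). $\gamma$ has components $\gamma_{sr}:F_k\otimes_FM_{h(b_r)}\to F_k\otimes_FM_{t(a_s)}$, $x\otimes m\mapsto\sum_{\omega\in\mathcal B_k}x\omega\otimes\partial_{b_r\omega a_s}(S)(m)$. *)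

From HB Require Import structures.
From mathcomp Require Import all_boot all_order all_algebra all_fingroup all_field.
From mathcomp Require Import cyclic.
Set Implicit Arguments. Unset Strict Implicit. Unset Printing Implicit Defensive.
Import GRing.Theory.
Local Open Scope ring_scope.

(* E/F cyclic Galois of degree d, F_i = Fv i the degree-(wt i) subextension,  *)
(* u = the fixed eigenbasis of E/F (a d.-tuple), B_i = elements of u in F_i.  *)
(* A path  w_0 c_1 w_1 ... c_m w_m  (w_t = u_{j_t}) is encoded as the pair     *)
(* (j_0, [:: (c_1, j_1); ...; (c_m, j_m)]); c_1 is applied LAST (composition  *)
(* order), so hd (c_{t+1}) = tl (c_t).  A cyclic path c_1 w_1 ... c_l w_l      *)
(* (the normal form of the terms of a potential) is encoded as the sequence   *)
(* [:: (c_1, j_1); ...; (c_l, j_l)].                                          *)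

Section Species.
Variables (F : fieldType) (E : splittingFieldType F).
Variables (Q0 Q1 : finType) (tl hd : Q1 -> Q0).
Variables (d : nat) (u : d.-tuple E) (Fv : Q0 -> {subfield E}).

Definition om (j : 'I_d) : E := tnth u j.

Definition arr := (Q1 * 'I_d)%type.

Definition Bv (i : Q0) : seq E := [seq om j | j <- enum 'I_d & om j \in Fv i].

Definition headv (v : Q0) (p : seq arr) : Q0 := if p is (c, _) :: _ then hd c else v.

Fixpoint vseq (v : Q0) (p : seq arr) : bool :=
  match p with
  | [::] => true
  | (c, j) :: p' => [&& om j \in Fv (tl c), headv v p' == tl c & vseq v p']
  end.

Definition vpath (v : Q0) (j0 : 'I_d) (p : seq arr) : bool :=
  (om j0 \in Fv (headv v p)) && vseq v p.

(* c_1 w_1 ... c_l w_l is a cyclic path (l >= 1, hd c_1 = tl c_l) *)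
Definition cyc_valid (P : seq arr) : bool :=
  if P is (c, _) :: _ then vseq (hd c) P else false.

Definition cyc_equiv (P P' : seq arr) : Prop := exists n, P' = rot n P.

(* A potential: a (possibly infinite) F-linear combination of cyclic paths,
   S P = coefficient of the cyclic path P.  (A,S) is an SP iff S is supported
   on cyclic paths and no two distinct terms are cyclically equivalent. *)
Definition is_SP (S : seq arr -> F) : Prop :=
  (forall P, S P != 0 -> cyc_valid P) /\
  (forall P P', S P != 0 -> S P' != 0 -> cyc_equiv P P' -> P = P').

(* cyclic derivative d_a of a cyclic path: the list of the paths
   w_t c_{t+1} ... c_l w_l c_1 ... c_{t-1} w_{t-1}, for all t with c_t = a *)
Definition deriv1 (a : Q1) (P : seq arr) : seq ('I_d * seq arr) :=
  flatten [seq (if rot t P is (c, j) :: rest then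
                  (if c == a then [:: (j, rest)] else [::]) else [::])
          | t <- iota 0 (size P)].

(* d_{b w a} of a cyclic path (w = u_j): the list of the paths
   w_{t+1} c_{t+2} ... c_{t-1} w_{t-1} for all t with c_t w_t c_{t+1} = b w a *)
Definition deriv2 (b : Q1) (j : 'I_d) (a : Q1) (P : seq arr) : seq ('I_d * seq arr) :=
  flatten [seq (if rot t P is (c1, j1) :: (c2, j2) :: rest then
                  (if [&& c1 == b, j1 == j & c2 == a] then [:: (j2, rest)] else [::])
                else [::])
          | t <- iota 0 (size P)].

(* ---- E (x)_F V, encoded by coordinates w.r.t. the F-basis u of E ---- *)
Definition Tn (V : lmodType F) := {ffun 'I_d -> V}.

Definition tens {V : lmodType F} (y : E) (m : V) : Tn V := [ffun l => coord u l y *: m].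

(* the action of x in E on E (x)_F V : x . (sum_j u_j (x) T_j) = sum_j (x u_j) (x) T_j *)
Definition tscale {V : lmodType F} (x : E) (T : Tn V) : Tn V :=
  \sum_(j < d) tens (x * om j) (T j).

Definition in_tens {V : lmodType F} (k : Q0) (T : Tn V) : Prop :=
  forall l, om l \notin Fv k -> T l = 0.

Variables (M : Q0 -> vectType F) (act : forall i, E -> 'End(M i))
          (am : forall a : Q1, 'Hom(M (tl a), M (hd a))).

Definition is_Fmodule : Prop :=
  forall i, act i 1 = \1%VF /\
    (forall c : F, act i (c%:A) = c *: \1%VF) /\
    {in Fv i &, forall x y, act i (x + y) = act i x + act i y} /\
    {in Fv i &, forall x y, act i (x * y) = (act i x \o act i y)%VF}.

Definition tot := forall i, M i.

Definition inj (v : Q0) (m : M v) : tot :=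
  fun i => if v =P i is ReflectT e then ecast i (M i) e m else 0.
Arguments inj v m : clear implicits.


Definition wmul (j : 'I_d) (x : tot) : tot := fun i => act i (om j) (x i).

Definition aop (c : Q1) (x : tot) : tot :=
  fun i => if hd c =P i is ReflectT e then ecast i (M i) e (am c (x (tl c))) else 0.

Fixpoint pop (j0 : 'I_d) (p : seq arr) (x : tot) : tot :=
  match p with
  | [::] => wmul j0 x
  | (c, j) :: p' => wmul j0 (aop c (pop j p' x))
  end.

Definition pact (v w : Q0) (j0 : 'I_d) (p : seq arr) (m : M v) : M w :=
  pop j0 p (inj v m) w.
Arguments pact v w j0 p m : clear implicits.


Definition nilpotent (N : nat) : Prop :=
  forall v w j0 p (m : M v), vpath v j0 p -> (N <= size p)%N -> pact v w j0 p m = 0.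

Variables (S : seq arr -> F) (N : nat).

(* action, on a representation where paths of length >= N vanish, of the
   (infinite) sum  sum_P S(P) f(P),  f(P) a list of paths obtained from the
   cyclic path P by a derivative; terms from cyclic paths of length > N+1
   have length >= N and act by zero, so the truncated sum is the action *)
Definition sact (v w : Q0) (f : seq arr -> seq ('I_d * seq arr)) (m : M v) : M w :=
  \sum_(n < N.+2) \sum_(P : n.-tuple arr) S P *: \sum_(q <- f P) pact v w q.1 q.2 m.
Arguments sact v w f m : clear implicits.


Definition dact (a : Q1) (m : M (hd a)) : M (tl a) := sact (hd a) (tl a) (deriv1 a) m.
Arguments dact a m : clear implicits.


Definition dact2 (b : Q1) (j : 'I_d) (a : Q1) (m : M (hd b)) : M (tl a) :=
  sact (hd b) (tl a) (deriv2 b j a) m.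
Arguments dact2 b j a m : clear implicits.


Definition jacobian : Prop := forall a (m : M (hd a)), dact a m = 0.

(* ---- the maps alpha, beta, gamma at the vertex k ----
   M_in  = (+)_{a : hd a = k} F_k (x) M_{tl a}   : families  forall a, Tn (M (tl a))
   M_out = (+)_{b : tl b = k} F_k (x) M_{hd b}   : families  forall b, Tn (M (hd b))
   (components for arrows not incident to k as required are ignored). *)
Variable k : Q0.

Definition in_Mout (T : forall b : Q1, Tn (M (hd b))) : Prop :=
  forall b, tl b = k -> in_tens k (T b).

Definition in_Min (T : forall a : Q1, Tn (M (tl a))) : Prop :=
  forall a, hd a = k -> in_tens k (T a).

(* alpha(x (x) m) = x a_s(m) *)
Definition alpha (T : forall a : Q1, Tn (M (tl a))) : M k :=
  \sum_(a | hd a == k) \sum_(l < d) act k (om l) (aop a (inj (tl a) (T a l)) k).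

Definition beta (m : M k) (b : Q1) : Tn (M (hd b)) :=
  \sum_(j | om j \in Fv k) tens (om j)^-1 (aop b (inj k (act k (om j) m)) (hd b)).

(* gamma_{sr}(x (x) m) = sum_{w in B_k} x w (x) d_{b_r w a_s}(S)(m),
   extended F-linearly via T = sum_l u_l (x) T_l *)
Definition gamma (T : forall b : Q1, Tn (M (hd b))) (a : Q1) : Tn (M (tl a)) :=
  \sum_(b | tl b == k) \sum_(l < d) \sum_(j | om j \in Fv k)
     tens (om l * om j) (dact2 b j a (T b l)).

End Species.

Arguments Bv {F E Q0 d} u Fv i.
Arguments is_SP {F E Q0 Q1} tl hd {d} u Fv S.
Arguments is_Fmodule {F E Q0} Fv {M} act.
Arguments nilpotent {F E Q0 Q1} tl hd {d} u Fv {M} act am N.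
Arguments jacobian {F E Q0 Q1} tl hd {d} u {M} act am S N.
Arguments in_Mout {F E Q0 Q1} tl hd {d} u Fv {M} k T.
Arguments gamma {F E Q0 Q1} tl hd {d} u Fv {M} act am S N k T a.
Arguments beta {F E Q0 Q1} tl hd {d} u Fv {M} act am k m b.
Arguments alpha {F E Q0 Q1} tl hd {d} u {M} act am k T.
Arguments tscale {F E d} u {V} x T.

From HB Require Import structures.
From mathcomp Require Import all_boot all_order all_algebra all_fingroup all_field.
From mathcomp Require Import cyclic.
Set Implicit Arguments. Unset Strict Implicit. Unset Printing Implicit Defensive.
Import GRing.Theory.
Local Open Scope ring_scope.

(* Three ingredients are developed before the theorem.
   - Galois theory of the eigenbasis u (section Eigenbasis): every element of
     u is an eigenvector of the whole group Gal(E/F), so a subfield K of E is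
     spanned by the basis vectors it contains, and the product of two of them
     is a nonzero F-multiple of a third.  Hence multiplication by w in B_k
     permutes the lines F w' (w' in B_k) (lemma [eb_mul_perm]), which yields
     the reindexing [casimir_reindex] of sums over B_k.
   - Combinatorics of cyclic derivatives (section DerivativeSplitting): for a
     cyclic path P whose base point is not k, and arrows a into k, b out of k,
       d_a P = sum_{b, w} d_{b w a} P . b w,   d_b P = sum_{a, w} w a . d_{b w a} P.
     Summed against S, the Jacobian relations d_a S = 0 = d_b S become
     [jacobian_head] and [jacobian_tail].
   - gamma in coordinates (section Gamma): its F_k-linearity comes from the
     bilinearity of pure tensors; gamma beta = 0 follows from the Casimir
     reindexing and [jacobian_head]; alpha gamma = 0 from [jacobian_tail], after
     expanding the F_k-action on M_k in the eigenbasis ([act_expand]). *)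

(* A function that is only known to satisfy [linear] (rather than carrying a
   canonical {linear _ -> _} structure) commutes with sums, scalings,
   addition and zero: we package it as a linear map on the fly. *)
Section LinearFunctions.
Variables (F : fieldType) (V W : lmodType F) (f : V -> W) (f_lin : linear f).

Let flin : {linear V -> W} := HB.pack f (GRing.isLinear.Build F V W *:%R f f_lin).

Lemma lin_sum I (r : seq I) (P : pred I) g :
  f (\sum_(i <- r | P i) g i) = \sum_(i <- r | P i) f (g i).
Proof. exact: (linear_sum flin). Qed.

Lemma lin_scale a x : f (a *: x) = a *: f x.
Proof. exact: (linearZZ flin). Qed.

Lemma lin_add x y : f (x + y) = f x + f y.
Proof. exact: (linearD flin). Qed.

Lemma lin_zero : f 0 = 0.
Proof. exact: (linear0 flin). Qed.

End LinearFunctions.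

Section Rotations.
Variable X : Type.

Lemma rot_nth (P : seq X) t x0 : (t < size P)%N ->
  rot t P = nth x0 P t :: (drop t.+1 P ++ take t P).
Proof. by move=> Ht; rewrite /rot (drop_nth x0 Ht). Qed.

Lemma rot_nth2 (P : seq X) t x0 : (t.+1 < size P)%N ->
  rot t P = nth x0 P t :: nth x0 P t.+1 :: (drop t.+2 P ++ take t P).
Proof. by move=> Ht; rewrite (rot_nth x0 (ltnW Ht)) (drop_nth x0 Ht). Qed.

Lemma rot_succ (P : seq X) t x0 : (t.+1 < size P)%N ->
  rot t.+1 P = nth x0 P t.+1 :: rcons (drop t.+2 P ++ take t P) (nth x0 P t).
Proof. by move=> Ht; rewrite (rot_nth x0 Ht) (take_nth x0 (ltnW Ht)) rcons_cat. Qed.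

Lemma rot_last (p0 : X) P :
  rot (size P) (p0 :: P) = last p0 P :: take (size P) (p0 :: P).
Proof. by rewrite (rot_nth p0) //= drop_oversize ?leqnn // -last_nth. Qed.

End Rotations.

Section Eigenbasis.
Variables (F : fieldType) (E : splittingFieldType F) (d : nat) (u : d.-tuple E).
Hypothesis HEgal : galois 1%VS {:E}.
Hypothesis Hbasis : basis_of {:E} u.
Hypothesis Heig : forall (s : gal_of {:E}), s \in ('Gal({:E} / 1%VS))%g ->
  forall j : 'I_d, exists c : F, s (tnth u j) = c%:A * tnth u j.

Local Notation eb := (om u).
Local Notation Gal := ('Gal({:E} / 1%VS))%g.

Lemma eb_neq0 j : eb j != 0.
Proof. exact/(free_not0 (basis_free Hbasis))/mem_tnth. Qed.

Lemma coord_eb j l : coord u l (eb j) = (j == l)%:R.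
Proof. by rewrite /om (tnth_nth 0) coord_free // (basis_free Hbasis). Qed.

Lemma eb_expand y : y = \sum_i coord u i y *: eb i.
Proof.
rewrite {1}(coord_basis Hbasis (memvf y)); apply: eq_bigr => i _.
by rewrite /om (tnth_nth 0).
Qed.

Lemma coord_gal s y l : s \in Gal ->
  coord u l (s y) = coord u l y * coord u l (s (eb l)).
Proof.
move=> Hs; rewrite {1}(eb_expand y) rmorph_sum linear_sum (bigD1 l) //= big1 ?addr0.
  by rewrite linearZ /= linearZ.
move=> i Hil; have [c Hc] := Heig Hs i.
by rewrite linearZ /= -/(om u i) Hc mulr_algl !linearZ /= coord_eb (negPf Hil) !mulr0.
Qed.

Lemma eigenvalue_coord s y (mu : F) l : s \in Gal ->
  s y = mu%:A * y -> coord u l y != 0 -> s (eb l) = mu%:A * eb l.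
Proof.
move=> Hs Hy Hc; have [lam Hlam] := Heig Hs l.
have Elam : coord u l (s (eb l)) = lam.
  by rewrite -/(om u l) Hlam mulr_algl linearZ /= coord_eb eqxx mulr1.
suff -> : mu = lam by [].
apply: (mulfI Hc); rewrite -Elam -coord_gal // Hy mulr_algl linearZ /=.
exact: mulrC.
Qed.

Lemma subfield_support (K : {subfield E}) y l :
  y \in K -> coord u l y != 0 -> eb l \in K.
Proof.
move=> Hy Hc.
have HK : galois K {:E} by apply: (galoisS _ HEgal); rewrite sub1v subvf.
rewrite -(galois_fixedField HK); apply/fixedFieldP; first exact: memvf.
move=> s Hs; have Hs1 : s \in Gal by apply: (subsetP (galS _ (sub1v K))).
have Hsy : s y = 1%:A * y by rewrite scale1r mul1r (fixed_gal (subvf K) Hs Hy).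
by rewrite (eigenvalue_coord Hs1 Hsy Hc) scale1r mul1r.
Qed.

Lemma subfield_expand (K : {subfield E}) y :
  y \in K -> y = \sum_(l | eb l \in K) coord u l y *: eb l.
Proof.
move=> Hy; rewrite {1}(eb_expand y) (bigID (fun l => eb l \in K)) /= addrC.
rewrite big1 ?add0r // => l Hl; case: (eqVneq (coord u l y) 0) => [->|Hc].
  by rewrite scale0r.
by rewrite (subfield_support Hy Hc) in Hl.
Qed.

(* A common eigenvector of Gal(E/F) has a single nonzero coordinate: the
   quotient of two basis vectors with the same eigenvalues is Galois-fixed,
   hence lies in F. *)
Lemma eigenvector_single_coord y l l' :
  (forall s, s \in Gal -> exists mu : F, s y = mu%:A * y) ->
  coord u l y != 0 -> coord u l' y != 0 -> l = l'.
Proof.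
move=> Hy Hl Hl'; apply/eqP; apply: contraT => Hll'.
set x := eb l / eb l'.
have Hx : eb l = x * eb l' by rewrite /x divfK ?eb_neq0.
have : x \in 1%VS.
  rewrite -(galois_fixedField HEgal); apply/fixedFieldP; first exact: memvf.
  move=> s Hs; have [mu Hmu] := Hy s Hs.
  apply: (@mulIf _ (s (eb l'))); first by rewrite fmorph_eq0 eb_neq0.
  rewrite -rmorphM /= -Hx !(eigenvalue_coord Hs Hmu) // Hx.
  exact: mulrCA.
case/vlineP => c Hc.
have : eb l = c *: eb l' by rewrite Hx Hc -scalerAl mul1r.
move/(congr1 (coord u l)); rewrite coord_eb eqxx linearZ /= coord_eb eq_sym (negPf Hll').
by rewrite mulr0 => /eqP; rewrite oner_eq0.
Qed.

Lemma subfield_eb_mul (K : {subfield E}) e i : eb e \in K -> eb i \in K ->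
  exists2 j, eb j \in K & eb e * eb i \in <[eb j]>%VS.
Proof.
move=> HeK HiK; set y := eb e * eb i.
have [l Hl] : exists l, coord u l y != 0.
  case: (pickP (fun l => coord u l y != 0)) => [l Hl|H0]; first by exists l.
  case/eqP: (mulf_neq0 (eb_neq0 e) (eb_neq0 i)); rewrite -/y (eb_expand y).
  by rewrite big1 // => l _; move/negbFE/eqP: (H0 l) => ->; rewrite scale0r.
have Hy : forall s, s \in Gal -> exists mu : F, s y = mu%:A * y.
  move=> s Hs; have [le Hle] := Heig Hs e; have [li Hli] := Heig Hs i.
  exists (le * li); rewrite rmorphM /= -!/(om u _) Hle Hli.
  by rewrite mulrACA -[(le * li)%:A]/(in_alg E (le * li)) rmorphM.
exists l; first exact: subfield_support (rpredM HeK HiK) Hl.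
apply/vlineP; exists (coord u l y).
rewrite {1}(eb_expand y) (bigD1 l) //= big1 ?addr0 // => l' Hl'.
case: (eqVneq (coord u l' y) 0) => [->|Hc]; first by rewrite scale0r.
by rewrite (eigenvector_single_coord Hy Hc Hl) eqxx in Hl'.
Qed.

Lemma eb_mul_perm (K : {subfield E}) j : eb j \in K ->
  exists pi : 'I_d -> 'I_d, [/\ injective pi,
    forall i, (eb (pi i) \in K) = (eb i \in K) &
    forall i, eb i \in K -> exists2 c : F, c != 0 & eb j * eb i = c%:A * eb (pi i)].
Proof.
move=> Hj.
pose pi i := if eb i \in K then
  odflt i [pick j' | (eb j' \in K) && (eb j * eb i \in <[eb j']>%VS)] else i.
have Hpi i : eb i \in K ->
    eb (pi i) \in K /\ exists2 c : F, c != 0 & eb j * eb i = c%:A * eb (pi i).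
  move=> Hi; rewrite /pi Hi; case: pickP => [j' /andP[Hj' /vlineP[c Hc]] | H] /=.
    split => //; exists c; last by rewrite mulr_algl.
    apply: contraTneq (mulf_neq0 (eb_neq0 j) (eb_neq0 i)) => c0.
    by rewrite Hc c0 scale0r eqxx.
  have [j' Hj' Hl] := subfield_eb_mul Hj Hi.
  by move: (H j'); rewrite Hj' Hl.
have HpiK i : (eb (pi i) \in K) = (eb i \in K).
  case: (boolP (eb i \in K)) => Hi; first by case: (Hpi i Hi).
  by rewrite /pi (negPf Hi) (negPf Hi).
exists pi; split=> // [i i' Epi|i Hi]; last by case: (Hpi i Hi).
case: (boolP (eb i \in K)) => Hi; last first.
  have Hi' : eb i' \notin K by rewrite -HpiK -Epi HpiK.
  by move: Epi; rewrite /pi (negPf Hi) (negPf Hi').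
have Hi' : eb i' \in K by rewrite -HpiK -Epi HpiK.
have [_ [c Hc Ei]] := Hpi i Hi; have [_ [c' Hc' Ei']] := Hpi i' Hi'.
have : c'%:A * eb i = c%:A * eb i' :> E.
  apply: (mulfI (eb_neq0 j)).
  by rewrite [LHS]mulrCA Ei [RHS]mulrCA Ei' Epi mulrCA.
rewrite !mulr_algl => /(congr1 (coord u i)); rewrite !linearZ /= !coord_eb eqxx mulr1.
by case: (eqVneq i' i) => // _; rewrite mulr0 => /eqP; rewrite (negPf Hc').
Qed.

End Eigenbasis.

Section PathActions.
Variables (F : fieldType) (E : splittingFieldType F).
Variables (Q0 Q1 : finType) (tl hd : Q1 -> Q0).
Variables (d : nat) (u : d.-tuple E) (Fv : Q0 -> {subfield E}).
Variables (M : Q0 -> vectType F) (act : forall i, E -> 'End(M i))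
          (am : forall a : Q1, 'Hom(M (tl a), M (hd a))).
Variables (S : seq (arr Q1 d) -> F) (N : nat).

Local Notation eb := (om u).
Local Notation pop := (pop u act am).
Local Notation vseq := (vseq tl hd u Fv).

Definition tr (v i : Q0) (z : M v) : M i :=
  if v =P i is ReflectT e then ecast i (M i) e z else 0.

Lemma tr_lin v i : linear (@tr v i).
Proof.
move=> a x y; rewrite /tr; case: eqP => [e|_]; last by rewrite scaler0 addr0.
by subst i.
Qed.

HB.instance Definition _ v i :=
  GRing.isLinear.Build F (M v) (M i) *:%R (@tr v i) (@tr_lin v i).

Lemma injE v (m : M v) i : inj m i = tr i m. Proof. by []. Qed.
Lemma aopE c x i : aop am c x i = tr i (am c (x (tl c))). Proof. by []. Qed.
Lemma wmulE j x i : wmul u act j x i = act i (eb j) (x i). Proof. by []. Qed.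

Lemma tr_id v (z : M v) : tr v z = z.
Proof. by rewrite /tr; case: eqP => // e; rewrite (eq_axiomK e). Qed.

Lemma tr_act v i y (z : M v) : tr i (act v y z) = act i y (tr i z).
Proof. by rewrite /tr; case: eqP => [e|_]; [subst i | rewrite linear0]. Qed.

Lemma inj_aop b z i : inj (aop am b z (hd b)) i = aop am b z i.
Proof. by rewrite injE !aopE tr_id. Qed.

Lemma pop_ext j p x y : (forall i, x i = y i) ->
  forall i, pop j p x i = pop j p y i.
Proof.
elim: p j => [|[c j'] p IH] j Hxy i /=; first by rewrite !wmulE Hxy.
by rewrite !wmulE !aopE IH.
Qed.

Lemma pop_lin j p a x y z : (forall i, z i = a *: x i + y i) ->
  forall i, pop j p z i = a *: pop j p x i + pop j p y i.
Proof.
elim: p j => [|[c j'] p IH] j Hz i /=; first by rewrite !wmulE Hz linearP.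
by rewrite !wmulE !aopE IH // !linearP.
Qed.

Lemma pop_rcons j0 p c j x :
  pop j0 (rcons p (c, j)) x = pop j0 p (aop am c (wmul u act j x)).
Proof. by elim: p j0 => [|[c' j'] p IH] j0 //=; rewrite IH. Qed.

Lemma pact_lin v w j p : linear (@pact _ _ _ _ tl hd _ u M act am v w j p).
Proof. by move=> c x y; apply: pop_lin => i; rewrite !injE linearP. Qed.

Lemma dact2_lin b j a : linear (@dact2 _ _ _ _ tl hd _ u M act am S N b j a).
Proof.
move=> c x y; rewrite /dact2 /sact scaler_sumr -big_split; apply: eq_bigr => n _.
rewrite scaler_sumr -big_split; apply: eq_bigr => P _.
rewrite (eq_bigr _ (fun q _ => @pact_lin _ _ q.1 q.2 c x y)) big_split -scaler_sumr /=.
by rewrite scalerDr !scalerA mulrC.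
Qed.

Lemma vseq_eb v p x0 t : vseq v p -> (t < size p)%N ->
  eb (nth x0 p t).2 \in Fv (tl (nth x0 p t).1).
Proof.
elim: p t => [|[c j] p IH] t //= /and3P[H1 H2 H3].
by case: t => [|t] //= Ht; apply: IH.
Qed.

Lemma vseq_hd v p x0 t : vseq v p -> (t.+1 < size p)%N ->
  hd (nth x0 p t.+1).1 = tl (nth x0 p t).1.
Proof.
elim: p t => [|[c j] p IH] t //= /and3P[H1 /eqP H2 H3].
case: t => [|t] /= Ht; last by apply: IH.
by case: p IH H2 H3 Ht => [|[c' j'] p].
Qed.

Lemma vseq_last v p x0 : vseq v p -> (0 < size p)%N ->
  tl (nth x0 p (size p).-1).1 = v.
Proof.
elim: p => [|[c j] p IH] //= /and3P[H1 /eqP H2 H3] _.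
by case: p IH H2 H3 => [|[c' j'] p] //= IH H2 H3; apply: IH.
Qed.

Lemma sum_deriv1 (V : zmodType) a P (G : 'I_d * seq (arr Q1 d) -> V) :
  \sum_(q <- deriv1 a P) G q = \sum_(0 <= t < size P)
     (if rot t P is (c, j) :: rest then (if c == a then G (j, rest) else 0) else 0).
Proof.
rewrite /deriv1 big_flatten big_map /index_iota subn0; apply: eq_bigr => t _.
case: (rot t P) => [|[c j] rest] /=; first by rewrite big_nil.
by case: (c == a); rewrite ?big_seq1 ?big_nil.
Qed.

Lemma sum_deriv2 (V : zmodType) b j0 a P (G : 'I_d * seq (arr Q1 d) -> V) :
  \sum_(q <- deriv2 b j0 a P) G q = \sum_(0 <= t < size P)
     (if rot t P is (c1, j1) :: (c2, j2) :: rest then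
        (if [&& c1 == b, j1 == j0 & c2 == a] then G (j2, rest) else 0) else 0).
Proof.
rewrite /deriv2 big_flatten big_map /index_iota subn0; apply: eq_bigr => t _.
case: (rot t P) => [|[c1 j1] [|[c2 j2] rest]] /=; rewrite ?big_nil //.
by case: ifP; rewrite ?big_seq1 ?big_nil.
Qed.

End PathActions.

(* For a cyclic path P whose base
   point is not the vertex hd a (resp. tl b), every occurrence of a (resp. b)
   in P is preceded (resp. followed) by an occurrence of some b w a. *)
Section DerivativeSplitting.
Variables (F : fieldType) (E : splittingFieldType F).
Variables (Q0 Q1 : finType) (tl hd : Q1 -> Q0).
Variables (d : nat) (u : d.-tuple E) (Fv : Q0 -> {subfield E}).
Variables (M : Q0 -> vectType F) (act : forall i, E -> 'End(M i))
          (am : forall a : Q1, 'Hom(M (tl a), M (hd a))).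

Local Notation eb := (om u).
Local Notation pop := (pop u act am).

Lemma deriv1_split_head P a x v : cyc_valid tl hd u Fv P ->
  (forall c j rest, P = (c, j) :: rest -> hd c != hd a) ->
  \sum_(q <- deriv1 a P) pop q.1 q.2 x v =
  \sum_(b | tl b == hd a) \sum_(j | eb j \in Fv (hd a))
     \sum_(q <- deriv2 b j a P) pop q.1 q.2 (aop am b (wmul u act j x)) v.
Proof.
case: P => [|[c0 j0] P'] // Hvs Hbase.
have Hc0 : c0 != a by apply: contraNneq (Hbase c0 j0 P' erefl) => ->.
rewrite sum_deriv1.
under [RHS]eq_bigr => b _ do under eq_bigr => j _ do rewrite sum_deriv2.
under [RHS]eq_bigr => b _ do rewrite exchange_big.
rewrite [RHS]exchange_big /= big_nat_recl // rot0 /= (negPf Hc0) add0r big_nat_recr //=.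
(* the last position of d_{b w a} would read c_l w_l c_0 with c_0 <> a *)
rewrite [X in _ = _ + X]big1 ?addr0; last first.
  move=> b _; apply: big1 => j _; rewrite (rot_last (c0, j0) P').
  case: P' {Hvs Hbase} => [|p1 P''] //=; rewrite (negPf Hc0).
  by case: (last p1 P'') => c1 j1; rewrite !andbF.
apply: eq_big_nat => t /andP[_ Ht].
have Ht1 : (t.+1 < size ((c0, j0) :: P'))%N by [].
rewrite (rot_succ (c0, j0) Ht1) (rot_nth2 (c0, j0) Ht1).
move: (vseq_eb (c0, j0) Hvs (ltnW Ht1)) (vseq_hd (c0, j0) Hvs Ht1).
case: (nth _ _ t) => c1 j1; case: (nth _ _ t.+1) => c2 j2 /= Hj1 Hhd.
case: (eqVneq c2 a) => [<-{a Hc0 Hbase}|Na]; last first.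
  by rewrite big1 // => b _; rewrite big1 // => j _; rewrite !andbF.
have Hc1 : tl c1 == hd c2 by rewrite Hhd.
have Hj1' : eb j1 \in Fv (hd c2) by rewrite Hhd.
rewrite pop_rcons (bigD1 c1) //= (bigD1 j1) //= !eqxx /=.
rewrite big1 ?addr0 => [|j /andP[_ /negPf Hj]]; last by rewrite eq_sym Hj.
rewrite big1 ?addr0 // => b /andP[_ /negPf Hb]; apply: big1 => j _.
by rewrite eq_sym Hb.
Qed.

Lemma deriv1_split_tail P b x v : cyc_valid tl hd u Fv P ->
  (forall c j rest, P = (c, j) :: rest -> hd c != tl b) ->
  \sum_(q <- deriv1 b P) pop q.1 q.2 x v =
  \sum_(a | hd a == tl b) \sum_(j | eb j \in Fv (tl b))
     act v (eb j) (tr v (am a (\sum_(q <- deriv2 b j a P) pop q.1 q.2 x (tl a)))).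
Proof.
case: P => [|[c0 j0] P'] // Hvs Hbase; have Hc0 := Hbase c0 j0 P' erefl.
rewrite sum_deriv1.
under [RHS]eq_bigr => a _ do under eq_bigr => j _ do
  rewrite sum_deriv2 !linear_sum.
under [RHS]eq_bigr => a _ do rewrite exchange_big.
rewrite [RHS]exchange_big /=; apply: eq_big_nat => t /andP[_ Ht].
case: (ltnP t.+1 (size ((c0, j0) :: P'))) => Ht1.
  rewrite (rot_nth2 (c0, j0) Ht1).
  move: (vseq_eb (c0, j0) Hvs (ltnW Ht1)) (vseq_hd (c0, j0) Hvs Ht1).
  case: (nth _ _ t) => c1 j1; case: (nth _ _ t.+1) => c2 j2 /= Hj1 Hhd.
  case: (eqVneq c1 b) => [<-{b Hc0 Hbase}|Nb]; last first.
    by rewrite big1 // => a _; rewrite big1 // => j _; rewrite /= !linear0.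
  rewrite (bigD1 c2) ?Hhd //= (bigD1 j1) //= !eqxx /= big1 ?addr0; last first.
    by move=> j /andP[_ /negPf Hj]; rewrite eq_sym Hj /= !linear0.
  rewrite big1 ?addr0 // => a /andP[_ /negPf Ha]; apply: big1 => j _.
  by rewrite [c2 == a]eq_sym Ha !andbF !linear0.
(* the last position starts with c_l, whose tail is the base point *)
have -> : t = size P' by apply/eqP; rewrite eqn_leq -ltnS Ht -ltnS Ht1.
rewrite (rot_last (c0, j0) P').
have := vseq_last (c0, j0) Hvs erefl.
rewrite /= -/(last (c0, j0) ((c0, j0) :: P')) nth_last /=.
case: (last (c0, j0) P') => cl jl /= Hl.
have Hcl : (cl == b) = false by apply/negbTE; apply: contra Hc0 => /eqP <-; rewrite Hl.
rewrite Hcl big1 // => a _; apply: big1 => j _.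
by case: (take _ _) => [|[c2 j2] r] /=; rewrite ?Hcl /= !linear0.
Qed.

End DerivativeSplitting.

Section FieldActions.
Variables (F : fieldType) (E : splittingFieldType F) (Q0 : finType).
Variables (Fv : Q0 -> {subfield E}) (M : Q0 -> vectType F)
          (act : forall i, E -> 'End(M i)).
Hypothesis HM : is_Fmodule Fv act.

Lemma act_mul i y z m : y \in Fv i -> z \in Fv i ->
  act i (y * z) m = act i y (act i z m).
Proof. by move=> Hy Hz; have [_ [_ [_ ->]]] := HM i; rewrite ?comp_lfunE. Qed.

Lemma act_alg i c m : act i c%:A m = c *: m.
Proof. by have [_ [-> _]] := HM i; rewrite lfunE /= id_lfunE. Qed.

Lemma act_scal i c y m : y \in Fv i -> act i (c *: y) m = c *: act i y m.
Proof. by move=> Hy; rewrite -mulr_algl act_mul ?act_alg // rpredZ // mem1v. Qed.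

Lemma act_sum i I (r : seq I) (P : pred I) (f : I -> E) m :
  (forall l, P l -> f l \in Fv i) ->
  act i (\sum_(l <- r | P l) f l) m = \sum_(l <- r | P l) act i (f l) m.
Proof.
move=> Hf; have [_ [_ [Hadd _]]] := HM i.
pose R y z := (y \in Fv i) /\ act i y m = z.
suff [] : R (\sum_(l <- r | P l) f l) (\sum_(l <- r | P l) act i (f l) m) by [].
apply: (big_ind2 R) => [|y1 z1 y2 z2 [H1 <-] [H2 <-]|l Pl]; last by split; auto.
  by split; rewrite ?rpred0 // -(scale0r 1) act_alg scale0r.
by split; rewrite ?rpredD // Hadd ?add_lfunE.
Qed.

Lemma act_expand d (u : d.-tuple E) i y m :
  galois 1%VS {:E} -> basis_of {:E} u ->
  (forall s, s \in ('Gal({:E} / 1%VS))%g ->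
     forall j : 'I_d, exists c : F, s (tnth u j) = c%:A * tnth u j) ->
  y \in Fv i -> act i y m = \sum_l coord u l y *: act i (om u l) m.
Proof.
move=> HEgal Hbasis Heig Hy.
rewrite {1}(subfield_expand HEgal Hbasis Heig Hy) act_sum => [|l Hl]; last first.
  by rewrite rpredZ.
rewrite [RHS](bigID (fun l => om u l \in Fv i)) /= [X in _ + X]big1 ?addr0.
  by apply: eq_bigr => l Hl; rewrite act_scal.
move=> l Hl; case: (eqVneq (coord u l y) 0) => [->|Hc]; first by rewrite scale0r.
by rewrite (subfield_support HEgal Hbasis Heig Hy Hc) in Hl.
Qed.

End FieldActions.

Section Tensors.
Variables (F : fieldType) (E : splittingFieldType F) (d : nat) (u : d.-tuple E).
Variable V : lmodType F.

Lemma tens_linr y : linear (@tens _ _ _ u V y).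
Proof. by move=> a x z; apply/ffunP => l; rewrite !ffunE scalerDr !scalerA mulrC. Qed.

Lemma tens_linl (m : V) : linear (fun y => @tens _ _ _ u V y m).
Proof. by move=> a x y; apply/ffunP => l; rewrite !ffunE linearP /= scalerDl scalerA. Qed.

Lemma tscale_lin x : linear (@tscale _ _ _ u V x).
Proof.
move=> a T T'; rewrite /tscale scaler_sumr -big_split; apply: eq_bigr => j _ /=.
by rewrite !ffunE tens_linr.
Qed.

Lemma tscaleE x (T : Tn d V) l : tscale u x T l = \sum_j coord u l (x * om u j) *: T j.
Proof. by rewrite /tscale sum_ffunE; apply: eq_bigr => j _; rewrite ffunE. Qed.

Section WithBasis.
Hypothesis Hbasis : basis_of {:E} u.

Lemma tens_expand y z (m : V) :
  \sum_l coord u l y *: tens u (om u l * z) m = tens u (y * z) m.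
Proof.
under eq_bigr => l _ do rewrite -(lin_scale (tens_linl m)).
rewrite -(lin_sum (tens_linl m)) {2}(eb_expand Hbasis y) mulr_suml.
by congr tens; apply: eq_bigr => l _; rewrite scalerAl.
Qed.

Lemma tscale_tens x y (m : V) : tscale u x (tens u y m) = tens u (x * y) m.
Proof.
rewrite /tscale mulrC -tens_expand; apply: eq_bigr => j _.
by rewrite ffunE (lin_scale (tens_linr _)) mulrC.
Qed.

End WithBasis.

End Tensors.

Section Gamma.
Variables (F : fieldType) (E : splittingFieldType F).
Variables (Q0 Q1 : finType) (tl hd : Q1 -> Q0).
Variables (d : nat) (u : d.-tuple E) (Fv : Q0 -> {subfield E}).
Variables (M : Q0 -> vectType F) (act : forall i, E -> 'End(M i))
          (am : forall a : Q1, 'Hom(M (tl a), M (hd a))).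
Variables (S : seq (arr Q1 d) -> F) (N : nat) (k : Q0).
Hypothesis HEgal : galois 1%VS {:E}.
Hypothesis Hbasis : basis_of {:E} u.
Hypothesis Heig : forall (s : gal_of {:E}), s \in ('Gal({:E} / 1%VS))%g ->
  forall j : 'I_d, exists c : F, s (tnth u j) = c%:A * tnth u j.
Hypothesis HM : is_Fmodule Fv act.
Hypothesis HSP : is_SP tl hd u Fv S.
Hypothesis HSk : forall P c j rest, S P != 0 -> P = (c, j) :: rest -> hd c != k.
Hypothesis Hjac : jacobian tl hd u act am S N.

Local Notation eb := (om u).
Local Notation D b j a := (@dact2 _ _ _ _ tl hd _ u M act am S N b j a).
Local Notation gammak := (gamma tl hd u Fv act am S N k).
Let Dlin b j a := @dact2_lin _ _ _ _ tl hd _ u M act am S N b j a.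

Lemma jacobian_head a (Ha : hd a = k) (n : M (hd a)) :
  \sum_(b | tl b == hd a) \sum_(j | eb j \in Fv (hd a))
     D b j a (aop am b (inj (act (hd a) (eb j) n)) (hd b)) = 0.
Proof.
rewrite -[RHS](Hjac n) /dact /dact2 /sact.
under eq_bigr => b _ do rewrite exchange_big.
rewrite exchange_big; apply: eq_bigr => n' _.
under eq_bigr => b _ do rewrite exchange_big.
rewrite exchange_big; apply: eq_bigr => P _.
under eq_bigr => b _ do rewrite -scaler_sumr.
rewrite -scaler_sumr; case: (eqVneq (S P) 0) => [->|HP]; first by rewrite !scale0r.
rewrite /pact (deriv1_split_head act am _ _ (HSP.1 _ HP)) => [|c j rest EP]; last first.
  by rewrite Ha; apply: HSk EP.
congr (_ *: _); apply: eq_bigr => b _; apply: eq_bigr => j _; apply: eq_bigr => q _.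
apply: pop_ext => i; rewrite inj_aop !aopE; congr (tr i (am b _)).
by rewrite wmulE !injE tr_act.
Qed.

Lemma jacobian_tail b (Hb : tl b = k) (n : M (hd b)) :
  \sum_(a | hd a == tl b) \sum_(j | eb j \in Fv (tl b))
     act (tl b) (eb j) (tr (tl b) (am a (D b j a n))) = 0.
Proof.
rewrite -[RHS](Hjac n) /dact /dact2 /sact.
under eq_bigr => a _ do under eq_bigr => j _ do rewrite !linear_sum.
under eq_bigr => a _ do under eq_bigr => j _ do under eq_bigr => n' _ do
  rewrite !linear_sum.
under eq_bigr => a _ do rewrite exchange_big.
rewrite exchange_big; apply: eq_bigr => n' _.
under eq_bigr => a _ do rewrite exchange_big.
rewrite exchange_big; apply: eq_bigr => P _.
under eq_bigr => a _ do under eq_bigr => j _ do rewrite !linearZ.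
under eq_bigr => a _ do rewrite -scaler_sumr.
rewrite -scaler_sumr; case: (eqVneq (S P) 0) => [->|HP]; first by rewrite !scale0r.
rewrite /pact (deriv1_split_tail act am _ _ (HSP.1 _ HP)) // => c j rest EP.
by rewrite Hb; apply: HSk EP.
Qed.

(* gamma is additive and commutes with the E-action: it is built from the
   bilinear pure tensors x w (x) d_{b w a}(S)(m). *)
Lemma gammaD T T' a : gammak (fun b => T b + T' b) a = gammak T a + gammak T' a.
Proof.
rewrite /gamma -big_split; apply: eq_bigr => b _; rewrite -big_split.
apply: eq_bigr => l _; rewrite -big_split; apply: eq_bigr => j _ /=.
by rewrite ffunE (lin_add (Dlin _ _)) (lin_add (tens_linr u _)).
Qed.

Lemma gammaZ x T a : gammak (fun b => tscale u x (T b)) a = tscale u x (gammak T a).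
Proof.
rewrite /gamma (lin_sum (tscale_lin u x)); apply: eq_bigr => b _.
rewrite (lin_sum (tscale_lin u x)).
under [RHS]eq_bigr => l _ do rewrite (lin_sum (tscale_lin u x)).
under [RHS]eq_bigr => l _ do under eq_bigr => j _ do rewrite (tscale_tens Hbasis) mulrA.
rewrite exchange_big [RHS]exchange_big; apply: eq_bigr => j _.
under eq_bigr => l _ do
  rewrite tscaleE (lin_sum (Dlin _ _)) (lin_sum (tens_linr u _)).
rewrite exchange_big; apply: eq_bigr => j' _ /=.
under eq_bigr => l _ do rewrite (lin_scale (Dlin _ _)) (lin_scale (tens_linr u _)).
by rewrite (tens_expand Hbasis).
Qed.

(* For w in B_k, multiplication by w permutes the lines F w' (w' in B_k), so
   sum_{w'} w'^-1 w (x) Z(w' m) = sum_{w'} w'^-1 (x) Z(w w' m). *)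
Lemma casimir_reindex (V : lmodType F) v j (Z : M v -> V) (HZ : linear Z) m :
  eb j \in Fv v ->
  \sum_(j' | eb j' \in Fv v) tens u ((eb j')^-1 * eb j) (Z (act v (eb j') m)) =
  \sum_(i | eb i \in Fv v) tens u (eb i)^-1 (Z (act v (eb j) (act v (eb i) m))).
Proof.
move=> Hj; have [pi [pi_inj piK pi_mul]] := eb_mul_perm HEgal Hbasis Heig Hj.
rewrite (reindex_inj pi_inj) /=; apply: eq_big => i; first by rewrite piK.
rewrite piK => Hi; have [c Hc Ei] := pi_mul i Hi.
rewrite -(act_mul HM) // Ei mulr_algl (act_scal HM) ?piK //.
rewrite (lin_scale HZ) (lin_scale (tens_linr u _)) -(lin_scale (tens_linl u _)).
have Hnz := eb_neq0 Hbasis.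
have -> : eb j = c%:A * eb (pi i) / eb i by rewrite -Ei mulfK.
by rewrite mulr_algl -scalerAl -scalerAr mulrA mulVf ?mul1r.
Qed.

(* gamma beta = 0: after the Casimir reindexing, each component of gamma beta
   is a tensor against the split Jacobian relation at a. *)
Lemma gamma_beta m a : hd a = k -> gammak (beta tl hd u Fv act am k m) a = 0.
Proof.
move=> Ha; move: m; rewrite -Ha => m; rewrite /gamma.
pose Z b (n : M (hd a)) := aop am b (inj n) (hd b).
have Zlin b j : linear (fun n : M (hd a) => D b j a (Z b n)).
  by move=> c x y; rewrite /Z !aopE !injE !linearP; apply: Dlin.
have betaE b l : beta tl hd u Fv act am (hd a) m b l =
    \sum_(j' | eb j' \in Fv (hd a)) coord u l (eb j')^-1 *: Z b (act (hd a) (eb j') m).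
  by rewrite /beta sum_ffunE; apply: eq_bigr => j' _; rewrite ffunE.
under eq_bigr => b _ do under eq_bigr => l _ do under eq_bigr => j _ do
  rewrite betaE (lin_sum (Dlin _ _)) (lin_sum (tens_linr u _)).
under eq_bigr => b _ do rewrite exchange_big.
under eq_bigr => b _ do under eq_bigr => j _ do rewrite exchange_big.
(* reassemble w'^-1 w from its coordinates, then reindex by the Casimir sum *)
under eq_bigr => b _ do under eq_bigr => j _ do under eq_bigr => j' _ do
  under eq_bigr => l _ do rewrite (lin_scale (Dlin _ _)) (lin_scale (tens_linr u _)).
under eq_bigr => b _ do under eq_bigr => j Hj do
  rewrite (eq_bigr _ (fun j' _ => tens_expand Hbasis _ _ _))
          (casimir_reindex (Zlin b j) m Hj).
under eq_bigr => b _ do rewrite exchange_big.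
rewrite exchange_big big1 // => i _.
under eq_bigr => b _ do rewrite -(lin_sum (tens_linr u _)).
by rewrite -(lin_sum (tens_linr u _)) (jacobian_head Ha) (lin_zero (tens_linr u _)).
Qed.

Lemma gammaE T a l : gammak T a l =
  \sum_(b | tl b == k) \sum_l' \sum_(j | eb j \in Fv k)
     coord u l (eb l' * eb j) *: D b j a (T b l').
Proof.
rewrite /gamma sum_ffunE; apply: eq_bigr => b _; rewrite sum_ffunE.
by apply: eq_bigr => l' _; rewrite sum_ffunE; apply: eq_bigr => j _; rewrite ffunE.
Qed.

(* alpha gamma = 0: the contributions of each arrow b leaving k and each
   basis vector w' of F_k assemble into w' . (split Jacobian relation at b). *)
Lemma alpha_gamma T : in_Mout tl hd u Fv k T -> alpha tl hd u act am k (gammak T) = 0.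
Proof.
move=> HT; rewrite /alpha.
have alphaE a l : act k (eb l) (aop am a (inj (gammak T a l)) k) =
    \sum_(b | tl b == k) \sum_l' \sum_(j | eb j \in Fv k)
      coord u l (eb l' * eb j) *: act k (eb l) (tr k (am a (D b j a (T b l')))).
  rewrite aopE injE tr_id gammaE !linear_sum; apply: eq_bigr => b _.
  rewrite !linear_sum; apply: eq_bigr => l' _.
  by rewrite !linear_sum; apply: eq_bigr => j _; rewrite !linearZ.
under eq_bigr => a _ do under eq_bigr => l _ do rewrite alphaE.
under eq_bigr => a _ do rewrite exchange_big.
rewrite exchange_big big1 // => b /eqP Hb.
under eq_bigr => a _ do rewrite exchange_big.
rewrite exchange_big big1 // => l' _.
case: (boolP (eb l' \in Fv k)) => Hl'; last first.
  rewrite big1 // => a _; rewrite big1 // => l _; rewrite big1 // => j _.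
  by rewrite (HT b Hb l' Hl') (lin_zero (Dlin _ _)) !linear0.
(* fold the coordinates of w' w back into the action of w' w = w' . w *)
under eq_bigr => a _ do rewrite exchange_big.
under eq_bigr => a _ do under eq_bigr => j Hj do
  rewrite -(act_expand HM _ HEgal Hbasis Heig) ?rpredM // (act_mul HM) //.
under eq_bigr => a _ do rewrite -linear_sum.
by rewrite -linear_sum -Hb jacobian_tail // linear0.
Qed.

End Gamma.

Unset Implicit Arguments.
Set Strict Implicit.

Theorem mainTheorem17
  (* weighted quiver (Q, wt) *)
  (Q0 Q1 : finType) (tl hd : Q1 -> Q0) (wt : Q0 -> nat)
  (Hwt : forall i, (0 < wt i)%N)
  (d : nat) (Hd : d = \big[lcmn/1%N]_(i : Q0) wt i)
  (* the field F with a primitive d-th root of unity, E/F cyclic Galois of degree d *)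
  (F : fieldType) (zeta : F) (Hzeta : d.-primitive_root zeta)
  (E : splittingFieldType F)
  (HEgal : galois 1%VS {:E}) (HEcyc : cyclic ('Gal({:E} / 1%VS))%g) (HEdim : \dim {:E} = d)
  (* the degree-wt i subextensions F_i *)
  (Fv : Q0 -> {subfield E}) (HFv : forall i, \dim (Fv i) = wt i)
  (* a fixed eigenbasis u of E/F *)
  (u : d.-tuple E) (Hbasis : basis_of {:E} u)
  (Heig : forall (s : gal_of {:E}), s \in ('Gal({:E} / 1%VS))%g ->
            forall j : 'I_d, exists c : F, s (tnth u j) = c%:A * tnth u j)
  (* the potential S *)
  (S : seq (arr Q1 d) -> F) (HSP : is_SP tl hd u Fv S)
  (* the vertex k *)
  (k : Q0) (Hk1 : 1 \in Bv u Fv k)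
  (Hno2 : ~ exists a b : Q1, [/\ tl a = k, hd a = tl b & hd b = k])
  (HSk : forall (P : seq (arr Q1 d)) c j rest, S P != 0 -> P = (c, j) :: rest -> hd c != k)
  (* the representation M *)
  (M : Q0 -> vectType F) (act : forall i, E -> 'End(M i))
  (am : forall a : Q1, 'Hom(M (tl a), M (hd a))) (N : nat)
  (HM : is_Fmodule Fv act) (Hnil : nilpotent tl hd u Fv act am N)
  (Hjac : jacobian tl hd u act am S N) :
  (* gamma is F_k-linear *)
  (forall T T', in_Mout tl hd u Fv k T -> in_Mout tl hd u Fv k T' -> forall a, hd a = k ->
      gamma tl hd u Fv act am S N k (fun b => T b + T' b) a
      = gamma tl hd u Fv act am S N k T a + gamma tl hd u Fv act am S N k T' a) /\
  (forall (x : E) T, x \in Fv k -> in_Mout tl hd u Fv k T -> forall a, hd a = k ->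
      gamma tl hd u Fv act am S N k (fun b => tscale u x (T b)) a
      = tscale u x (gamma tl hd u Fv act am S N k T a)) /\
  (* gamma beta = 0 *)
  (forall (m : M k) a, hd a = k ->
      gamma tl hd u Fv act am S N k (beta tl hd u Fv act am k m) a = 0) /\
  (* alpha gamma = 0 *)
  (forall T, in_Mout tl hd u Fv k T ->
      alpha tl hd u act am k (gamma tl hd u Fv act am S N k T) = 0).
(* Only the Galois eigenbasis, the F_k-module structure of M, the SP condition,
   the condition on the base points of S and the Jacobian relations are used. *)
Proof.
split; [|split; [|split]].
- by move=> T T' _ _ a _; apply: gammaD.
- by move=> x T _ _ a _; apply: (gammaZ Fv act am S N k Hbasis).
- by move=> m a Ha; apply: (gamma_beta HEgal Hbasis Heig HM HSP HSk Hjac).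
- by move=> T HT; apply: (alpha_gamma HEgal Hbasis Heig HM HSP HSk Hjac).
Qed.
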